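(* In the standing setting below, every alternative $c$-convex function $\phi:\mathbb{X}\to\mathbb{R}$ is Lipschitz with Lipschitz constant $\|c\|_{\mathrm{Lip}}$.
   Context: Standing setting: $\mathbb{X},\mathbb{Y}\subset\mathbb{R}^n$ are compact with non-empty interior; $c:\mathbb{X}\times\mathbb{Y}\to\mathbb{R}$ has continuous $D_xc$, $D_yc$, and continuous mixed second derivatives with $D^2_{xy}c=(D^2_{yx}c)^T$; for each $x$ the map $y\mapsto -D_xc(x,y)$ is injective on $\mathbb{Y}$ and for each $y$ the map $x\mapsto -D_yc(x,y)$ is injective on $\mathbb{X}$; $D^2_{xy}c(x,y)$ is invertible everywhere; for every $y$ the set $\{-D_yc(x,y):x\in\mathbb{X}\}$ is convex and for every $x$ the set $\{-D_xc(x,y):y\in\mathbb{Y}\}$ is convex. $\|c\|_{\mathrm{Lip}}=\sup_{(x_1,y_1)\ne(x_0,y_0)}\frac{|c(x_1,y_1)-c(x_0,y_0)|}{(\|x_1-x_0\|^2+\|y_1-y_0\|^2)^{1/2}}$. $c$-chord: for $X_i=(x_i,u_i)\in\mathbb{X}\times\mathbb{R}$, $F_{X_0X_1}(x)=\sup\{-c(x,y)+h: y\in\mathbb{Y},h\in\mathbb{R},-c(x_i,y)+h\le u_i, i=0,1\}$. $\phi:\mathbb{X}\to\mathbb{R}$ is alternative $c$-convex if for all $x_0,x_1\in\mathbb{X}$, with $X_i=(x_i,\phi(x_i))$, $\phi(x)\le F_{X_0X_1}(x)$ for all $x\in\mathbb{X}$. *)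

From HB Require Import structures.
From mathcomp Require Import all_boot all_order all_algebra.
From mathcomp Require Import all_classical all_reals all_analysis.
Set Implicit Arguments. Unset Strict Implicit. Unset Printing Implicit Defensive.
Import Order.TTheory GRing.Theory Num.Theory.
Import numFieldNormedType.Exports.
Local Open Scope classical_set_scope.
Local Open Scope ring_scope.

Section Defs.
Variables (R : realType) (n : nat).
Local Notation V := 'rV[R]_n.

Definition enorm (x : V) : R := Num.sqrt (\sum_(i < n) (x ord0 i) ^+ 2).

Definition ev (i : 'I_n) : V := delta_mx ord0 i.

Definition Dx (c : V -> V -> R) (x y : V) : V :=
  \row_i derive (fun x' => c x' y) x (ev i).
Definition Dy (c : V -> V -> R) (x y : V) : V :=
  \row_i derive (fun y' => c x y') y (ev i).

(* mixed second derivatives: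
   (D2xy c x y) i j = d/dy_j (d/dx_i c),  (D2yx c x y) i j = d/dx_j (d/dy_i c) *)
Definition D2xy (c : V -> V -> R) (x y : V) : 'M[R]_n :=
  \matrix_(i, j) derive (fun y' => Dx c x y' ord0 i) y (ev j).
Definition D2yx (c : V -> V -> R) (x y : V) : 'M[R]_n :=
  \matrix_(i, j) derive (fun x' => Dy c x' y ord0 i) x (ev j).

Definition convex_set (S : set V) : Prop :=
  forall a b t, S a -> S b -> 0 <= t <= 1 -> S ((1 - t) *: a + t *: b).

Definition standing_setting (X Y : set V) (c : V -> V -> R) : Prop :=
  [/\ compact X /\ interior X !=set0,
      compact Y /\ interior Y !=set0,
      (forall x y, X x -> Y y -> forall i,
          derivable (fun x' => c x' y) x (ev i) /\
          derivable (fun y' => c x y') y (ev i)) /\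
      {within X `*` Y, continuous (fun p => Dx c p.1 p.2)} /\
      {within X `*` Y, continuous (fun p => Dy c p.1 p.2)},
      (forall x y, X x -> Y y -> forall i j,
          derivable (fun y' => Dx c x y' ord0 i) y (ev j) /\
          derivable (fun x' => Dy c x' y ord0 i) x (ev j)) /\
      {within X `*` Y, continuous (fun p => D2xy c p.1 p.2)} /\
      {within X `*` Y, continuous (fun p => D2yx c p.1 p.2)} /\
      (forall x y, X x -> Y y -> D2xy c x y = (D2yx c x y)^T) &
      [/\
        (forall x, X x -> forall y1 y2, Y y1 -> Y y2 ->
            - Dx c x y1 = - Dx c x y2 -> y1 = y2),
        (forall y, Y y -> forall x1 x2, X x1 -> X x2 ->
            - Dy c x1 y = - Dy c x2 y -> x1 = x2),
        (forall x y, X x -> Y y -> D2xy c x y \in unitmx),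
        (forall y, Y y -> convex_set [set - Dy c x y | x in X]) &
        (forall x, X x -> convex_set [set - Dx c x y | y in Y])]].

Definition LipNorm (X Y : set V) (c : V -> V -> R) : \bar R :=
  ereal_sup [set r | exists x1 y1 x0 y0,
     [/\ X x1 /\ Y y1, X x0 /\ Y y0, (x1, y1) != (x0, y0) &
         r = (`|c x1 y1 - c x0 y0| /
              Num.sqrt (enorm (x1 - x0) ^+ 2 + enorm (y1 - y0) ^+ 2))%:E]].

Definition cchord (Y : set V) (c : V -> V -> R) (x0 : V) (u0 : R)
    (x1 : V) (u1 : R) (x : V) : \bar R :=
  ereal_sup [set r | exists y h,
     [/\ Y y, - c x0 y + h <= u0, - c x1 y + h <= u1 & r = (- c x y + h)%:E]].

Definition alt_c_convex (X Y : set V) (c : V -> V -> R) (phi : V -> R) : Prop :=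
  forall x0 x1, X x0 -> X x1 -> forall x, X x ->
    ((phi x)%:E <= cchord Y c x0 (phi x0) x1 (phi x1) x)%E.

End Defs.

From HB Require Import structures.
From mathcomp Require Import all_boot all_order all_algebra.
From mathcomp Require Import all_classical all_reals all_analysis.
From mathcomp Require Import lra.
Set Implicit Arguments. Unset Strict Implicit.
Import Order.TTheory GRing.Theory Num.Theory.
Local Open Scope classical_set_scope.
Local Open Scope ring_scope.

(* Taking both chord points equal to a, the c-chord through (a, phi a) is a
   c-affine function -c(., y) + h with h <= phi a + c(a, y), so
   phi b <= phi a + sup_y (c(a, y) - c(b, y)) <= phi a + ||c||_Lip |b - a|;
   exchanging a and b gives the Lipschitz bound. *)

Section Enorm.
Variables (R : realType) (n : nat).
Implicit Types v : 'rV[R]_n.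

Lemma enorm0 : enorm (0 : 'rV[R]_n) = 0.
Proof.
rewrite /enorm (eq_bigr (fun _ => 0)); last by move=> i _; rewrite mxE expr0n.
by rewrite big1 // sqrtr0.
Qed.

Lemma enormN v : enorm (- v) = enorm v.
Proof. by rewrite /enorm; congr Num.sqrt; apply: eq_bigr => i _; rewrite mxE sqrrN. Qed.

Lemma enorm_eq0 v : (enorm v == 0) = (v == 0).
Proof.
apply/idP/eqP => [|->]; last by rewrite enorm0.
have sq_ge0 i : 0 <= v ord0 i ^+ 2 by exact: sqr_ge0.
rewrite sqrtr_eq0 => sum_le0.
have /eqP : \sum_(i < n) v ord0 i ^+ 2 = 0.
  by apply/eqP; rewrite eq_le sum_le0 sumr_ge0.
rewrite psumr_eq0 // => /allP sq_eq0; apply/rowP => i; rewrite mxE.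
by apply/eqP; rewrite -sqrf_eq0; exact: sq_eq0 (mem_index_enum i).
Qed.

Lemma enorm_gt0 v : (0 < enorm v) = (v != 0).
Proof. by rewrite lt_neqAle sqrtr_ge0 andbT eq_sym enorm_eq0. Qed.

End Enorm.

Section LipNorm.
Variables (R : realType) (n : nat) (X Y : set 'rV[R]_n).
Variable c : 'rV[R]_n -> 'rV[R]_n -> R.

Lemma LipNorm_ge_ratio a b y : X a -> X b -> Y y -> a != b ->
  ((`|c b y - c a y| / enorm (b - a))%:E <= LipNorm X Y c)%E.
Proof.
move=> Xa Xb Yy neq_ab; apply: ereal_sup_ubound; exists b, y, a, y; split => //.
  by apply: contraNneq neq_ab => -[->].
have /ltW enorm_ge0 : 0 < enorm (b - a) by rewrite enorm_gt0 subr_eq0 eq_sym.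
by rewrite subrr enorm0 expr0n /= addr0 sqrtr_sqr (ger0_norm enorm_ge0).
Qed.

Lemma LipNorm_ge0 a b y : X a -> X b -> Y y -> a != b -> (0 <= LipNorm X Y c)%E.
Proof.
move=> Xa Xb Yy neq_ab; apply: le_trans (LipNorm_ge_ratio Xa Xb Yy neq_ab).
by rewrite lee_fin divr_ge0 ?sqrtr_ge0.
Qed.

Lemma cost_increment_le_LipNorm L a b y : LipNorm X Y c = L%:E ->
  X a -> X b -> Y y -> `|c b y - c a y| <= L * enorm (b - a).
Proof.
move=> HL Xa Xb Yy; have [->|neq_ab] := eqVneq a b.
  by rewrite !subrr normr0 enorm0 mulr0.
have := LipNorm_ge_ratio Xa Xb Yy neq_ab; rewrite HL lee_fin ler_pdivrMr //.
by rewrite enorm_gt0 subr_eq0 eq_sym.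
Qed.

End LipNorm.

Lemma alt_c_convex_increment_le (R : realType) (n : nat) (X Y : set 'rV[R]_n)
    (c : 'rV[R]_n -> 'rV[R]_n -> R) (phi : 'rV[R]_n -> R) a b (K : R) :
  alt_c_convex X Y c phi -> X a -> X b ->
  (forall y, Y y -> c a y - c b y <= K) -> phi b - phi a <= K.
Proof.
move=> alt Xa Xb cost_le.
have chord_le : (cchord Y c a (phi a) a (phi a) b <= (phi a + K)%:E)%E.
  apply: ge_ereal_sup => _ [y [h [Yy h_le _ ->]]].
  by rewrite lee_fin; have := cost_le y Yy; lra.
by have := le_trans (alt a a Xa Xa b Xb) chord_le; rewrite lee_fin; lra.
Qed.

Theorem lemma4p4 (R : realType) (n : nat) (X Y : set 'rV[R]_n)
    (c : 'rV[R]_n -> 'rV[R]_n -> R) (phi : 'rV[R]_n -> R) :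
  standing_setting X Y c ->
  alt_c_convex X Y c phi ->
  forall x0 x1, X x0 -> X x1 ->
    ((`|phi x1 - phi x0|)%:E <= LipNorm X Y c * (enorm (x1 - x0))%:E)%E.
Proof.
move=> [_ [_ [y0 /interior_subset Yy0]] _ _ _] alt x0 x1 X0 X1.
have [->|neq_x] := eqVneq x1 x0; first by rewrite !subrr normr0 enorm0 mule0.
have enorm_pos : 0 < enorm (x1 - x0) by rewrite enorm_gt0 subr_eq0.
have := LipNorm_ge0 c X1 X0 Yy0 neq_x.
case HL: (LipNorm X Y c) => [L| |] // _; last first.
  by rewrite mulyr gtr0_sg // mul1e leey.
have incr_le a b : X a -> X b -> phi b - phi a <= L * enorm (b - a).
  move=> Xa Xb; have cost_le := cost_increment_le_LipNorm HL Xa Xb.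
  apply: alt_c_convex_increment_le alt Xa Xb _ => y /cost_le.
  by rewrite distrC; exact: le_trans (ler_norm _).
have := incr_le _ _ X0 X1; have := incr_le _ _ X1 X0.
rewrite -[x0 - x1]opprB enormN -EFinM lee_fin ler_norml => le10 ->.
by rewrite andbT lerNl opprB.
Qed.
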